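(* Let $\Psi=\Psi^++\Psi^-\in\Delta_8=\Delta_8^+\oplus\Delta_8^-$ be an $8$-dimensional spinor with $\Psi^+\neq0$ and $\Psi^-\neq0$. Then there exists a family, depending on $25$ real parameters, of pairs $(\mathrm{T},\mathrm{F})$ with $\mathrm{T}\in\Lambda^3(\mathbb{R}^8)$ and $\mathrm{F}\in\Lambda^4(\mathbb{R}^8)$ such that for every vector $X\in\mathbb{R}^8$ $$\tfrac14\,(X\lrcorner\mathrm{T})\cdot\Psi+\mathrm{F}\cdot X\cdot\Psi=0 .$$
   Context: $\mathbb{R}^8$ carries the Euclidean metric; $\Delta_8=\Delta_8^+\oplus\Delta_8^-$ is the real $16$-dimensional spin representation of $\mathrm{Spin}(8)$ split into its two half-spin representations; Clifford multiplication satisfies $X\cdot X=-|X|^2$, and $k$-forms act by Clifford multiplication ($e_{i_1}\wedge\cdots\wedge e_{i_k}\mapsto e_{i_1}\cdots e_{i_k}$ in an orthonormal basis, distinct indices). *)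

From HB Require Import structures.
From mathcomp Require Import all_boot all_order all_algebra.
From mathcomp Require Import reals.
Set Implicit Arguments. Unset Strict Implicit. Unset Printing Implicit Defensive.
Import Order.TTheory GRing.Theory Num.Theory.
Local Open Scope ring_scope.

Section Spin8.
Variable R : realType.

Definition vec8 := 'I_8 -> R.
(* coefficient functions of 2-, 3-, 4-forms: B = sum_{i<j} B i j e_i/\e_j etc. *)
Definition form2 := 'I_8 -> 'I_8 -> R.
Definition form3 := 'I_8 -> 'I_8 -> 'I_8 -> R.
Definition form4 := 'I_8 -> 'I_8 -> 'I_8 -> 'I_8 -> R.

Definition alternating3 (T : form3) : Prop :=
  forall i j k, T j i k = - T i j k /\ T i k j = - T i j k.
Definition alternating4 (F : form4) : Prop :=
  forall i j k l, [/\ F j i k l = - F i j k l, F i k j l = - F i j k l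
                    & F i j l k = - F i j k l].

(* Clifford multiplication by e_i on Delta_8 = R^16 (column vectors):
   g i g j + g j g i = -2 delta_ij, i.e. X.X = -|X|^2 *)
Definition is_clifford_rep (g : 'I_8 -> 'M[R]_16) : Prop :=
  forall i j : 'I_8, g i *m g j + g j *m g i = (if i == j then - 2 else 0)%:M.

(* volume element e_0 ... e_7; Delta_8^+/- are its (+1)/(-1)-eigenspaces *)
Definition cvol (g : 'I_8 -> 'M[R]_16) : 'M[R]_16 := \prod_(i < 8) g i.

Definition clif_vec (g : 'I_8 -> 'M[R]_16) (X : vec8) : 'M[R]_16 :=
  \sum_(i < 8) X i *: g i.
Definition clif2 (g : 'I_8 -> 'M[R]_16) (B : form2) : 'M[R]_16 :=
  \sum_(i < 8) \sum_(j < 8 | (i < j)%N) B i j *: (g i *m g j).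
Definition clif3 (g : 'I_8 -> 'M[R]_16) (T : form3) : 'M[R]_16 :=
  \sum_(i < 8) \sum_(j < 8 | (i < j)%N) \sum_(k < 8 | (j < k)%N)
     T i j k *: (g i *m g j *m g k).
Definition clif4 (g : 'I_8 -> 'M[R]_16) (F : form4) : 'M[R]_16 :=
  \sum_(i < 8) \sum_(j < 8 | (i < j)%N) \sum_(k < 8 | (j < k)%N)
     \sum_(l < 8 | (k < l)%N) F i j k l *: (g i *m g j *m g k *m g l).

Definition contract (X : vec8) (T : form3) : form2 :=
  fun j k => \sum_(i < 8) X i * T i j k.

Definition solves (g : 'I_8 -> 'M[R]_16) (Psi : 'cV[R]_16) (T : form3) (F : form4)
  : Prop :=
  forall X : vec8,
    (1 / 4 : R) *: (clif2 g (contract X T) *m Psi)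
      + clif4 g F *m (clif_vec g X *m Psi) = 0.

End Spin8.

From HB Require Import structures.
From mathcomp Require Import all_boot all_order all_algebra.
From mathcomp Require Import reals.
From mathcomp Require Import ring lra zify.
Set Implicit Arguments. Unset Strict Implicit. Unset Printing Implicit Defensive.
Import Order.TTheory GRing.Theory Num.Theory.
Local Open Scope ring_scope.

(** Since X ↦ X·Ψ⁺ maps R⁸ injectively into the 8-dimensional Δ⁻, we can write
    Ψ⁻ = ξ·Ψ⁺ with ξ ≠ 0.  For a 3-form T with ξ⌟T = 0 and T·Ψ⁺ = 0, the Clifford
    identities X·T + T·X = -2 X⌟T, X·T - T·X = 2 X∧T and (⋆F)· = vol·F· show that
    F = λ ξ∧T + μ ⋆(ξ∧T), with λ = (1 - |ξ|⁻²)/16 and μ = -(1 + |ξ|⁻²)/16, solves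
    the equation.  The 3-forms with ξ⌟T = 0 form a 35-dimensional space, which
    T ↦ T·Ψ⁺ maps into Δ⁻, so the admissible T form a space of dimension at least
    35 - 8 = 27 ≥ 25.  The identities in Cl(R⁸) are checked by reflection: both
    sides are expanded into words in the generators with symbolic coefficients,
    which are brought to normal form and compared. *)

(** * Normal form of Clifford words *)

(* [word_ins n s] and [word_sort s] return (b, w) with g_n·g_s = (-1)^b g_w and
   g_s = (-1)^b g_w respectively, using g_i² = -1 and g_i g_j = -g_j g_i. *)
Fixpoint word_ins (n : nat) (s : seq nat) : bool * seq nat :=
  if s is m :: s' then
    if (n < m)%N then (false, n :: s)
    else if n == m then (true, s')
    else let p := word_ins n s' in (~~ p.1, m :: p.2)
  else (false, [:: n]).

Fixpoint word_sort (s : seq nat) : bool * seq nat :=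
  if s is n :: s' then
    let p := word_sort s' in let q := word_ins n p.2 in (addb p.1 q.1, q.2)
  else (false, [::]).

Definition word8 (s : seq nat) : bool := all (fun k => k < 8)%N s.

Lemma word8_ins n s : (n < 8)%N -> word8 s -> word8 (word_ins n s).2.
Proof.
elim: s => [|m s IH] /= n8; first by rewrite andbT.
case/andP=> m8 s8; case: ltnP => _ /=; first by rewrite n8 m8 s8.
by case: eqP => _ //=; rewrite m8 IH.
Qed.

Lemma word8_sort s : word8 s -> word8 (word_sort s).2.
Proof. by elim: s => [|n s IH] //= /andP [n8 /IH]; apply: word8_ins. Qed.

(* A term ((c, vs), w) stands for c·∏_{v ∈ vs} env v · g_w, where the variables
   are natural-number codes interpreted by an environment env. *)
Definition monom := (int * seq nat)%type.
Definition cterm := (monom * seq nat)%type.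

(* [foldr] rather than a big operator, which is locked and would block [vm_compute]. *)
Definition prodz (s : seq int) : int := foldr *%R 1 s.

Definition norm_term (vn : nat -> int * nat) (t : cterm) : cterm :=
  let w := word_sort t.2 in
  ((t.1.1 * (-1) ^+ w.1 * prodz [seq (vn v).1 | v <- t.1.2],
    sort leq [seq (vn v).2 | v <- t.1.2]), w.2).

Definition term_key (t : cterm) := (t.1.2, t.2).

Definition key_coef k (ts : seq cterm) : int :=
  foldr (fun t c => if term_key t == k then t.1.1 + c else c) 0 ts.

(* Compares the coefficients of two term lists after normalizing words, and
   variables by [vn]: variable v stands for (vn v).1 times variable (vn v).2. *)
Definition terms_eqb vn (ts1 ts2 : seq cterm) : bool :=
  let n1 := map (norm_term vn) ts1 in let n2 := map (norm_term vn) ts2 in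
  all (fun t => word8 t.2) (ts1 ++ ts2) &&
  all (fun k => key_coef k n1 == key_coef k n2) (map term_key (n1 ++ n2)).

Definition terms_mul (ts1 ts2 : seq cterm) : seq cterm :=
  [seq ((t1.1.1 * t2.1.1, t1.1.2 ++ t2.1.2), t1.2 ++ t2.2) | t1 <- ts1, t2 <- ts2].

Definition terms_scale (c : int) (ts : seq cterm) : seq cterm :=
  [seq ((c * t.1.1, t.1.2), t.2) | t <- ts].

Lemma prodzE (R : pzRingType) (s : seq int) :
  (prodz s)%:~R = \prod_(x <- s) (x%:~R : R).
Proof. by elim: s => [|a s IH]; rewrite ?big_nil ?big_cons //= intrM IH. Qed.

Section CliffordWords.
Variables (R : realType) (g : 'I_8 -> 'M[R]_16).
Hypothesis hg : is_clifford_rep g.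

Lemma clif_gen_sqr i : g i *m g i = - 1%:M.
Proof.
have := hg i i; rewrite eqxx => /matrixP h; apply/matrixP => a b.
by move: (h a b); rewrite !mxE; case: (a == b); rewrite /= ?mulr1n ?mulr0n => ?; lra.
Qed.

Lemma clif_gen_anticomm i j : i != j -> g i *m g j = - (g j *m g i).
Proof.
move=> /negbTE ij; apply/eqP; rewrite -addr_eq0 hg ij.
by apply/eqP/matrixP => a b; rewrite !mxE mul0rn.
Qed.

Fixpoint cword (s : seq nat) : 'M[R]_16 :=
  if s is n :: s' then g (inord n) *m cword s' else 1%:M.

Lemma cword_cat s t : cword (s ++ t) = cword s *m cword t.
Proof. by elim: s => [|n s IH] /=; rewrite ?mul1mx // IH mulmxA. Qed.

Lemma cword_ins n s : (n < 8)%N -> word8 s ->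
  g (inord n) *m cword s = (-1) ^+ (word_ins n s).1 *: cword (word_ins n s).2.
Proof.
elim: s => [|m s IH] /= n8; first by rewrite scale1r.
case/andP=> m8 s8; case: ltnP => [_|mn] /=; first by rewrite scale1r.
case: eqP => [->|/eqP nm] /=; first by rewrite mulmxA clif_gen_sqr mulNmx mul1mx scaleN1r.
have ij : (inord n : 'I_8) != inord m.
  by apply: contra nm => /eqP/(congr1 val) /=; rewrite !inordK // => ->.
by rewrite mulmxA clif_gen_anticomm // mulNmx -mulmxA IH // signrN scaleNr scalemxAr.
Qed.

Lemma cword_sort s : word8 s -> cword s = (-1) ^+ (word_sort s).1 *: cword (word_sort s).2.
Proof.
elim: s => [|n s IH] /=; first by rewrite scale1r.
case/andP => n8 s8; rewrite IH // -scalemxAr cword_ins ?word8_sort //.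
by rewrite scalerA signr_addb.
Qed.

End CliffordWords.

Section TermEvaluation.
Variables (R : realType) (g : 'I_8 -> 'M[R]_16) (env : nat -> R).

Definition monom_val (x : monom) : R := x.1%:~R * \prod_(v <- x.2) env v.

Definition eval_terms (ts : seq cterm) : 'M[R]_16 :=
  \sum_(t <- ts) monom_val t.1 *: cword g t.2.

Lemma eval_terms_cat ts1 ts2 :
  eval_terms (ts1 ++ ts2) = eval_terms ts1 + eval_terms ts2.
Proof. exact: big_cat. Qed.

Lemma eval_terms_scale c ts : eval_terms (terms_scale c ts) = c%:~R *: eval_terms ts.
Proof.
rewrite /eval_terms big_map scaler_sumr; apply: eq_bigr => t _.
by rewrite /monom_val /= intrM scalerA mulrA.
Qed.

Lemma eval_terms_mul ts1 ts2 :
  eval_terms ts1 *m eval_terms ts2 = eval_terms (terms_mul ts1 ts2).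
Proof.
rewrite /eval_terms big_allpairs_dep mulmx_suml; apply: eq_bigr => t1 _.
rewrite mulmx_sumr; apply: eq_bigr => t2 _.
rewrite -scalemxAl -scalemxAr scalerA -cword_cat /monom_val /= big_cat /= intrM.
by congr (_ *: _); ring.
Qed.

Section Normalization.
Hypothesis hg : is_clifford_rep g.
Variable vn : nat -> int * nat.
Hypothesis env_vn : forall v, env v = (vn v).1%:~R * env (vn v).2.

Lemma eval_norm_term t : word8 t.2 ->
  monom_val (norm_term vn t).1 *: cword g (norm_term vn t).2 = monom_val t.1 *: cword g t.2.
Proof.
case: t => [[c vs] w] /= w8; rewrite [cword g w](cword_sort hg w8) scalerA.
congr (_ *: _); rewrite /monom_val /= (perm_big _ (permEl (perm_sort leq _))) /= big_map.
rewrite [in RHS](eq_bigr _ (fun v _ => env_vn v)) big_split /=.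
by rewrite !intrM prodzE big_map rmorph_sign; ring.
Qed.

Definition key_val (k : seq nat * seq nat) : 'M[R]_16 :=
  (\prod_(v <- k.1) env v) *: cword g k.2.

Lemma eval_terms_by_key (ts : seq cterm) K : uniq K -> all (fun t => term_key t \in K) ts ->
  eval_terms ts = \sum_(k <- K) (key_coef k ts)%:~R *: key_val k.
Proof.
move=> uK; elim: ts => [|t ts IH] /=.
  by move=> _; rewrite /eval_terms big_nil big1 // => k _; rewrite scale0r.
case/andP => tK tsK; rewrite /eval_terms big_cons -/(eval_terms ts) IH //.
have -> : \sum_(k <- K) (key_coef k (t :: ts))%:~R *: key_val k =
    \sum_(k <- K) (if term_key t == k then t.1.1 else 0)%:~R *: key_val k
    + \sum_(k <- K) (key_coef k ts)%:~R *: key_val k.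
  rewrite -big_split; apply: eq_bigr => k _ /=; rewrite -scalerDl -intrD.
  by case: eqP; rewrite ?add0r.
congr (_ + _); rewrite (bigD1_seq (term_key t)) //= eqxx big1 ?addr0; last first.
  by move=> k /negbTE; rewrite eq_sym => ->; rewrite scale0r.
by rewrite /monom_val /key_val scalerA.
Qed.

Lemma eval_terms_eq ts1 ts2 : terms_eqb vn ts1 ts2 -> eval_terms ts1 = eval_terms ts2.
Proof.
case/andP => /allP w8 /allP coefs.
have normE ts : {subset ts <= ts1 ++ ts2} ->
    eval_terms ts = eval_terms (map (norm_term vn) ts).
  move=> sub; rewrite /eval_terms big_map; apply: eq_big_seq => t /sub/w8 t8.
  by rewrite eval_norm_term.
set n1 := map _ ts1 in coefs; set n2 := map _ ts2 in coefs.
set K := undup (map term_key (n1 ++ n2)).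
have inK ts : {subset ts <= n1 ++ n2} -> all (fun t => term_key t \in K) ts.
  by move=> sub; apply/allP => t /sub tn; rewrite mem_undup map_f.
have uK : uniq K by rewrite undup_uniq.
rewrite (normE ts1) => [|t]; last by rewrite mem_cat => ->.
rewrite (normE ts2) => [|t]; last by rewrite mem_cat orbC => ->.
rewrite (eval_terms_by_key uK (inK _ _)) => [|t]; last by rewrite mem_cat => ->.
rewrite (eval_terms_by_key uK (inK _ _)) => [|t]; last by rewrite mem_cat orbC => ->.
by apply: eq_big_seq => k; rewrite mem_undup => /coefs /eqP ->.
Qed.

End Normalization.
End TermEvaluation.

(* Explicit ordinals, since [enum] and [inord] do not reduce under [vm_compute]. *)
Definition ord8 : seq 'I_8 :=
  [:: @Ordinal 8 0 isT; @Ordinal 8 1 isT; @Ordinal 8 2 isT; @Ordinal 8 3 isT;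
      @Ordinal 8 4 isT; @Ordinal 8 5 isT; @Ordinal 8 6 isT; @Ordinal 8 7 isT].

Definition pairs8 : seq ('I_8 * 'I_8) :=
  [seq (i, j) | i : 'I_8 <- ord8, j <- [seq j : 'I_8 <- ord8 | (i < j)%N]].
Definition triples8 : seq ('I_8 * 'I_8 * 'I_8) :=
  [seq (p, k) | p : 'I_8 * 'I_8 <- pairs8, k <- [seq k : 'I_8 <- ord8 | (p.2 < k)%N]].
Definition quads8 : seq ('I_8 * 'I_8 * 'I_8 * 'I_8) :=
  [seq (q, l) | q : 'I_8 * 'I_8 * 'I_8 <- triples8, l <- [seq l : 'I_8 <- ord8 | (q.2 < l)%N]].

Lemma perm_ord8 : perm_eq ord8 (enum 'I_8).
Proof.
apply: uniq_perm => [//||i]; first exact: enum_uniq.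
by rewrite mem_enum; case: i => [[|[|[|[|[|[|[|[|//]]]]]]]] ?].
Qed.

Lemma big_ord8 (V : nmodType) (P : pred 'I_8) (F : 'I_8 -> V) :
  \sum_(i < 8 | P i) F i = \sum_(i <- [seq i <- ord8 | P i]) F i.
Proof. by rewrite big_filter (perm_big _ perm_ord8) big_enum_cond. Qed.

Section Expansions.
Variables (R : realType) (g : 'I_8 -> 'M[R]_16).

Lemma clif2_pairs8 B :
  clif2 g B = \sum_(p <- pairs8) B p.1 p.2 *: cword g [:: val p.1; val p.2].
Proof.
rewrite /clif2 big_allpairs_dep (big_ord8 xpredT); apply: eq_bigr => i _.
by rewrite big_ord8; apply: eq_bigr => j _; rewrite /= !inord_val mulmx1.
Qed.

Lemma clif3_triples8 T : clif3 g T =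
  \sum_(p <- triples8) T p.1.1 p.1.2 p.2 *: cword g [:: val p.1.1; val p.1.2; val p.2].
Proof.
rewrite /clif3 big_allpairs_dep big_allpairs_dep (big_ord8 xpredT).
apply: eq_bigr => i _; rewrite big_ord8; apply: eq_bigr => j _.
by rewrite big_ord8; apply: eq_bigr => k _; rewrite /= !inord_val mulmx1 !mulmxA.
Qed.

Lemma clif4_quads8 F : clif4 g F = \sum_(p <- quads8) F p.1.1.1 p.1.1.2 p.1.2 p.2
   *: cword g [:: val p.1.1.1; val p.1.1.2; val p.1.2; val p.2].
Proof.
rewrite /clif4 !big_allpairs_dep (big_ord8 xpredT).
apply: eq_bigr => i _; rewrite big_ord8; apply: eq_bigr => j _.
rewrite big_ord8; apply: eq_bigr => k _; rewrite big_ord8; apply: eq_bigr => l _.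
by rewrite /= !inord_val mulmx1 !mulmxA.
Qed.

Lemma cword_prod s : cword g s = \prod_(k <- s) g (inord k).
Proof. by elim: s => [|n s IH]; rewrite ?big_nil ?big_cons //= IH mulmxE. Qed.

Lemma cvol_iota : cvol g = cword g (iota 0 8).
Proof.
rewrite cword_prod -[iota 0 8]/(index_iota 0 8) big_mkord.
by apply: eq_bigr => i _; rewrite inord_val.
Qed.

Variable env : nat -> R.

Lemma clif_vec_terms (ms : 'I_8 -> seq monom) X :
  (forall i, X i = \sum_(x <- ms i) monom_val env x) ->
  clif_vec g X = eval_terms g env [seq (x, [:: val i]) | i <- ord8, x <- ms i].
Proof.
move=> XE; rewrite /clif_vec (big_ord8 xpredT) /eval_terms big_allpairs_dep filter_predT.
by apply: eq_bigr => i _; rewrite XE scaler_suml /= inord_val mulmx1.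
Qed.

Lemma clif2_terms (ms : 'I_8 * 'I_8 -> seq monom) B :
  (forall p, B p.1 p.2 = \sum_(x <- ms p) monom_val env x) ->
  clif2 g B = eval_terms g env [seq (x, [:: val p.1; val p.2]) | p <- pairs8, x <- ms p].
Proof.
move=> BE; rewrite clif2_pairs8 /eval_terms [in RHS]big_allpairs_dep.
by apply: eq_bigr => p _; rewrite BE scaler_suml.
Qed.

Lemma clif3_terms (ms : 'I_8 * 'I_8 * 'I_8 -> seq monom) T :
  (forall p, T p.1.1 p.1.2 p.2 = \sum_(x <- ms p) monom_val env x) ->
  clif3 g T = eval_terms g env
    [seq (x, [:: val p.1.1; val p.1.2; val p.2]) | p <- triples8, x <- ms p].
Proof.
move=> TE; rewrite clif3_triples8 /eval_terms [in RHS]big_allpairs_dep.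
by apply: eq_bigr => p _; rewrite TE scaler_suml.
Qed.

Lemma clif4_terms (ms : 'I_8 * 'I_8 * 'I_8 * 'I_8 -> seq monom) F :
  (forall p, F p.1.1.1 p.1.1.2 p.1.2 p.2 = \sum_(x <- ms p) monom_val env x) ->
  clif4 g F = eval_terms g env
    [seq (x, [:: val p.1.1.1; val p.1.1.2; val p.1.2; val p.2]) | p <- quads8, x <- ms p].
Proof.
move=> FE; rewrite clif4_quads8 /eval_terms [in RHS]big_allpairs_dep.
by apply: eq_bigr => p _; rewrite FE scaler_suml.
Qed.

Lemma cvol_terms : cvol g = eval_terms g env [:: ((1, [::]), iota 0 8)].
Proof.
by rewrite cvol_iota /eval_terms big_seq1 /monom_val big_nil mulr1 scale1r.
Qed.

End Expansions.

(* Variable codes: 0..7 for X, 8..15 for Y, [tvar] for T and [fvar] for F. *)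
Definition tvar (i j k : nat) : nat := 16 + (64 * i + 8 * j + k).
Definition fvar (i j k l : nat) : nat := 528 + (512 * i + 64 * j + 8 * k + l).

Definition coef_env (R : realType) (X Y : vec8 R) (T : form3 R) (F : form4 R) (v : nat) : R :=
  if (v < 8)%N then X (inord v)
  else if (v < 16)%N then Y (inord (v - 8))
  else if (v < 528)%N then
    let c := (v - 16)%N in T (inord (c %/ 64)) (inord (c %/ 8 %% 8)) (inord (c %% 8))
  else let c := (v - 528)%N in
    F (inord (c %/ 512)) (inord (c %/ 64 %% 8)) (inord (c %/ 8 %% 8)) (inord (c %% 8)).

Section CoefficientEnvironment.
Variables (R : realType) (X Y : vec8 R) (T : form3 R) (F : form4 R).
Local Notation env := (coef_env X Y T F).

Lemma coef_env_x (i : 'I_8) : env i = X i.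
Proof. by rewrite /coef_env ltn_ord inord_val. Qed.

Lemma coef_env_y (i : 'I_8) : env (8 + i) = Y i.
Proof.
have i8 := ltn_ord i; rewrite /coef_env (_ : (8 + i < 8)%N = false) ?addKn.
  by rewrite (_ : (8 + i < 16)%N) ?inord_val //; lia.
lia.
Qed.

Lemma coef_env_tvar (i j k : nat) : (i < 8)%N -> (j < 8)%N -> (k < 8)%N ->
  env (tvar i j k) = T (inord i) (inord j) (inord k).
Proof.
move=> i8 j8 k8; rewrite /coef_env.
have : tvar i j k = (16 + (64 * i + 8 * j + k))%N by []; move: (tvar i j k) => v vE.
have [-> -> ->] : [/\ (v < 8)%N = false, (v < 16)%N = false & (v < 528)%N] by split; lia.
have [-> -> ->] : [/\ ((v - 16) %/ 64 = i)%N, ((v - 16) %/ 8 %% 8 = j)%N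
                    & ((v - 16) %% 8 = k)%N] by split; lia.
by [].
Qed.

Lemma coef_env_t (i j k : 'I_8) : env (tvar i j k) = T i j k.
Proof. by rewrite coef_env_tvar // !inord_val. Qed.

Lemma coef_env_fvar (i j k l : nat) : (i < 8)%N -> (j < 8)%N -> (k < 8)%N -> (l < 8)%N ->
  env (fvar i j k l) = F (inord i) (inord j) (inord k) (inord l).
Proof.
move=> i8 j8 k8 l8; rewrite /coef_env.
have : fvar i j k l = (528 + (512 * i + 64 * j + 8 * k + l))%N by [].
move: (fvar i j k l) => v vE.
have [-> -> ->] : [/\ (v < 8)%N = false, (v < 16)%N = false & (v < 528)%N = false].
  by split; lia.
have [-> -> -> ->] : [/\ ((v - 528) %/ 512 = i)%N, ((v - 528) %/ 64 %% 8 = j)%N,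
    ((v - 528) %/ 8 %% 8 = k)%N & ((v - 528) %% 8 = l)%N] by split; lia.
by [].
Qed.

End CoefficientEnvironment.

Definition sort3 (i j k : nat) : int * (nat * nat * nat) :=
  if (i == j) || (j == k) || (i == k) then (0, (i, j, k))
  else if (i < j)%N then
    if (j < k)%N then (1, (i, j, k))
    else if (i < k)%N then (-1, (i, k, j)) else (1, (k, i, j))
  else if (i < k)%N then (-1, (j, i, k))
  else if (j < k)%N then (1, (j, k, i)) else (-1, (k, j, i)).

Lemma sort3_lt8 i j k : (i < 8)%N -> (j < 8)%N -> (k < 8)%N ->
  [/\ ((sort3 i j k).2.1.1 < 8)%N, ((sort3 i j k).2.1.2 < 8)%N & ((sort3 i j k).2.2 < 8)%N].
Proof. by move=> i8 j8 k8; rewrite /sort3; repeat case: ifP => _ //=. Qed.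

Lemma alt_sort3 (R : realFieldType) (f : nat -> nat -> nat -> R) :
  (forall i j k, f j i k = - f i j k /\ f i k j = - f i j k) ->
  forall i j k, f i j k = (sort3 i j k).1%:~R *
    f (sort3 i j k).2.1.1 (sort3 i j k).2.1.2 (sort3 i j k).2.2.
Proof.
move=> f_alt i j k.
have f12 a b c : f b a c = - f a b c by case: (f_alt a b c).
have f23 a b c : f a c b = - f a b c by case: (f_alt a b c).
have f_aac a c : f a a c = 0 by have := f12 a a c; lra.
have f_acc a c : f a c c = 0 by have := f23 a c c; lra.
have f_aca a c : f a c a = 0 by rewrite f23 f_aac oppr0.
rewrite /sort3; case: eqP => [->|_]; first by rewrite f_aac mul0r.
case: eqP => [->|_]; first by rewrite f_acc mul0r.
case: eqP => [->|_]; first by rewrite f_aca mul0r.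
have cyc a b c : f b c a = f a b c by rewrite f23 f12 opprK.
have sgN1 x : (-1)%:~R * x = - x by rewrite mulrN1z mulN1r.
rewrite /=; case: (ltnP i j) => _ /=.
  case: (ltnP j k) => _ /=; first by rewrite mul1r.
  case: (ltnP i k) => _ /=; last by rewrite cyc mul1r.
  by rewrite sgN1 (f23 i k j).
case: (ltnP i k) => _ /=; first by rewrite sgN1 (f12 j i k).
case: (ltnP j k) => _ /=; first by rewrite (cyc i j k) mul1r.
by rewrite sgN1 (f12 j k i) opprK (cyc i j k).
Qed.

Definition tvar_norm (v : nat) : int * nat :=
  if (16 <= v < 528)%N then
    let c := (v - 16)%N in let s := sort3 (c %/ 64) (c %/ 8 %% 8) (c %% 8) in
    (s.1, tvar s.2.1.1 s.2.1.2 s.2.2)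
  else (1, v).

Lemma coef_env_tvar_norm (R : realType) (X Y : vec8 R) (T : form3 R) (F : form4 R) :
  alternating3 T ->
  forall v, coef_env X Y T F v = (tvar_norm v).1%:~R * coef_env X Y T F (tvar_norm v).2.
Proof.
move=> T_alt v; rewrite /tvar_norm; case: ifP => [/andP [v16 v528]|_]; last by rewrite mul1r.
set c := (v - 16)%N.
have [i8 j8 k8] : [/\ (c %/ 64 < 8)%N, (c %/ 8 %% 8 < 8)%N & (c %% 8 < 8)%N] by split; lia.
have [s1 s2 s3] := sort3_lt8 i8 j8 k8.
have -> : coef_env X Y T F v = T (inord (c %/ 64)) (inord (c %/ 8 %% 8)) (inord (c %% 8)).
  rewrite /coef_env v528; have [-> ->] : (v < 8)%N = false /\ (v < 16)%N = false by split; lia.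
  by [].
rewrite /= coef_env_tvar //.
have := @alt_sort3 R (fun i j k => T (inord i) (inord j) (inord k)).
by apply=> i j k; apply: T_alt.
Qed.

Definition var_id (v : nat) : int * nat := (1, v).

Lemma env_var_id (R : realType) (env : nat -> R) v : env v = (var_id v).1%:~R * env (var_id v).2.
Proof. by rewrite mul1r. Qed.

(** * Clifford identities *)

Definition wedge13 (R : realType) (X : vec8 R) (T : form3 R) : form4 R :=
  fun i j k l => X i * T j k l - X j * T i k l + X k * T i j l - X l * T i j k.

(* For distinct a b c d, e_a e_b e_c e_d = ±e_w with w increasing; the sign is
   chosen so that vol·e_{w^c} equals the returned sign times e_{abcd}. *)
Definition hodge_index (a b c d : nat) : int * seq nat :=
  let w := word_sort [:: a; b; c; d] in
  if size w.2 == 4 then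
    let cw := [seq x <- iota 0 8 | x \notin w.2] in
    ((-1) ^+ w.1 * (-1) ^+ (word_sort (iota 0 8 ++ cw)).1, cw)
  else (0, [:: 0; 0; 0; 0]%N).

Definition hodge4 (R : realType) (F : form4 R) : form4 R :=
  fun i j k l => let h := hodge_index i j k l in
  h.1%:~R * F (inord (nth 0 h.2 0)) (inord (nth 0 h.2 1)) (inord (nth 0 h.2 2))
              (inord (nth 0 h.2 3)).

Definition vec_terms (o : nat) : seq cterm :=
  [seq (x, [:: val i]) | i <- ord8, x <- [:: (1%:Z, [:: o + val i])]].

Definition form3_terms : seq cterm :=
  [seq (x, [:: val p.1.1; val p.1.2; val p.2]) | p : 'I_8 * 'I_8 * 'I_8 <- triples8,
     x <- [:: (1%:Z, [:: tvar p.1.1 p.1.2 p.2])]].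

Lemma monom_val1 (R : realType) (env : nat -> R) v : monom_val env (1, [:: v]) = env v.
Proof. by rewrite /monom_val big_seq1 mul1r. Qed.

Lemma monom_val2 (R : realType) (env : nat -> R) c a b :
  monom_val env (c, [:: a; b]) = c%:~R * (env a * env b).
Proof. by rewrite /monom_val !big_cons big_nil mulr1. Qed.

Section CliffordIdentities.
Variables (R : realType) (g : 'I_8 -> 'M[R]_16).
Hypothesis hg : is_clifford_rep g.

Lemma clif_vec_coef_env X Y T F :
  clif_vec g X = eval_terms g (coef_env X Y T F) (vec_terms 0).
Proof. by apply: clif_vec_terms => i; rewrite big_seq1 monom_val1 coef_env_x. Qed.

Lemma clif3_coef_env X Y T F :
  clif3 g T = eval_terms g (coef_env X Y T F) form3_terms.
Proof. by apply: clif3_terms => p; rewrite big_seq1 monom_val1 coef_env_t. Qed.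

Lemma clif_vec_anticomm X Y :
  clif_vec g X *m clif_vec g Y + clif_vec g Y *m clif_vec g X =
  (-2 * \sum_(i < 8) X i * Y i) *: 1%:M.
Proof.
pose env := coef_env X Y (fun _ _ _ => 0) (fun _ _ _ _ => 0).
have -> : clif_vec g Y = eval_terms g env (vec_terms 8).
  by apply: clif_vec_terms => i; rewrite big_seq1 monom_val1 /env coef_env_y.
have -> : (-2 * \sum_(i < 8) X i * Y i) *: 1%:M =
    eval_terms g env [seq ((-2, [:: val i; 8 + val i]), [::]) | i <- ord8].
  rewrite /eval_terms big_map (big_ord8 xpredT) filter_predT mulr_sumr scaler_suml.
  by apply: eq_bigr => i _; rewrite monom_val2 /env coef_env_x coef_env_y.
rewrite (clif_vec_coef_env X Y (fun _ _ _ => 0) (fun _ _ _ _ => 0)) !eval_terms_mul.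
rewrite -eval_terms_cat; apply: (eval_terms_eq hg (env_var_id env)).
by vm_compute.
Qed.

Lemma clif_vec3_anticomm X T : alternating3 T ->
  clif_vec g X *m clif3 g T + clif3 g T *m clif_vec g X = - 2 *: clif2 g (contract X T).
Proof.
move=> T_alt; pose env := coef_env X X T (fun _ _ _ _ => 0).
have -> : clif2 g (contract X T) = eval_terms g env
   [seq (x, [:: val p.1; val p.2]) | p : 'I_8 * 'I_8 <- pairs8,
      x <- [seq (1%:Z, [:: val i; tvar i p.1 p.2]) | i : 'I_8 <- ord8]].
  apply: clif2_terms => p; rewrite /contract (big_ord8 xpredT) filter_predT big_map.
  by apply: eq_bigr => i _; rewrite monom_val2 /env coef_env_x coef_env_t mul1r.
rewrite (clif_vec_coef_env X X T (fun _ _ _ _ => 0)) (clif3_coef_env X X T (fun _ _ _ _ => 0)).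
rewrite -[- 2]/((-2)%:~R) -eval_terms_scale !eval_terms_mul -eval_terms_cat.
apply: (eval_terms_eq hg (coef_env_tvar_norm _ _ _ T_alt)).
by vm_compute.
Qed.

Lemma clif_vec3_comm X T :
  clif_vec g X *m clif3 g T - clif3 g T *m clif_vec g X = 2 *: clif4 g (wedge13 X T).
Proof.
pose env := coef_env X X T (fun _ _ _ _ => 0).
have -> : clif4 g (wedge13 X T) = eval_terms g env
   [seq (x, [:: val p.1.1.1; val p.1.1.2; val p.1.2; val p.2])
      | p : 'I_8 * 'I_8 * 'I_8 * 'I_8 <- quads8,
      x <- [:: (1%:Z, [:: val p.1.1.1; tvar p.1.1.2 p.1.2 p.2]);
               (-1, [:: val p.1.1.2; tvar p.1.1.1 p.1.2 p.2]);
               (1%:Z, [:: val p.1.2; tvar p.1.1.1 p.1.1.2 p.2]);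
               (-1, [:: val p.2; tvar p.1.1.1 p.1.1.2 p.1.2])]].
  apply: clif4_terms => p; rewrite !big_cons big_nil !monom_val2 /env !coef_env_x !coef_env_t.
  by rewrite /wedge13; ring.
rewrite (clif_vec_coef_env X X T (fun _ _ _ _ => 0)) (clif3_coef_env X X T (fun _ _ _ _ => 0)).
rewrite -[2]/((2%:Z)%:~R) -scaleN1r -[-1]/((-1)%:~R) -!eval_terms_scale !eval_terms_mul.
rewrite -eval_terms_scale -eval_terms_cat; apply: (eval_terms_eq hg (env_var_id env)).
by vm_compute.
Qed.

Lemma hodge_index_lt8 a b c d : all (fun x => x < 8)%N (hodge_index a b c d).2.
Proof.
rewrite /hodge_index; case: ifP => _ //; apply/allP => x.
by rewrite mem_filter mem_iota => /andP [_].
Qed.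

Lemma clif4_hodge4 F : clif4 g (hodge4 F) = cvol g *m clif4 g F.
Proof.
pose env := coef_env (fun _ => 0) (fun _ => 0) (fun _ _ _ => 0) F.
have nth_lt8 s n : all (fun x => x < 8)%N s -> (nth 0 s n < 8)%N.
  move=> /allP s8; case: (ltnP n (size s)) => sn; first exact/s8/mem_nth.
  by rewrite nth_default.
have -> : clif4 g (hodge4 F) = eval_terms g env
   [seq (x, [:: val p.1.1.1; val p.1.1.2; val p.1.2; val p.2])
      | p : 'I_8 * 'I_8 * 'I_8 * 'I_8 <- quads8,
      x <- let h := hodge_index p.1.1.1 p.1.1.2 p.1.2 p.2 in
           [:: (h.1, [:: fvar (nth 0 h.2 0) (nth 0 h.2 1) (nth 0 h.2 2) (nth 0 h.2 3)])]].
  apply: clif4_terms => p; rewrite /= big_seq1 /monom_val big_seq1 /env.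
  by rewrite coef_env_fvar ?nth_lt8 ?hodge_index_lt8.
have -> : clif4 g F = eval_terms g env
   [seq (x, [:: val p.1.1.1; val p.1.1.2; val p.1.2; val p.2])
      | p : 'I_8 * 'I_8 * 'I_8 * 'I_8 <- quads8,
      x <- [:: (1%:Z, [:: fvar p.1.1.1 p.1.1.2 p.1.2 p.2])]].
  apply: clif4_terms => p; rewrite big_seq1 monom_val1 /env.
  by rewrite coef_env_fvar ?ltn_ord // !inord_val.
rewrite (cvol_terms g env) eval_terms_mul; apply: (eval_terms_eq hg (env_var_id env)).
by vm_compute.
Qed.

Lemma cvol_clif_vec_anticomm X : cvol g *m clif_vec g X = - (clif_vec g X *m cvol g).
Proof.
pose env := coef_env X X (fun _ _ _ => 0) (fun _ _ _ _ => 0).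
rewrite (clif_vec_coef_env X X (fun _ _ _ => 0) (fun _ _ _ _ => 0)) (cvol_terms g env).
rewrite -scaleN1r -[-1]/((-1)%:~R) !eval_terms_mul -eval_terms_scale.
by apply: (eval_terms_eq hg (env_var_id env)); vm_compute.
Qed.

Lemma cvol_clif3_anticomm T : cvol g *m clif3 g T = - (clif3 g T *m cvol g).
Proof.
pose env := coef_env (fun _ => 0) (fun _ => 0) T (fun _ _ _ _ => 0).
rewrite (clif3_coef_env (fun _ => 0) (fun _ => 0) T (fun _ _ _ _ => 0)) (cvol_terms g env).
rewrite -scaleN1r -[-1]/((-1)%:~R) !eval_terms_mul -eval_terms_scale.
by apply: (eval_terms_eq hg (env_var_id env)); vm_compute.
Qed.

End CliffordIdentities.

Lemma natmul2_inj (R : numFieldType) (V : lmodType R) (u v : V) : u *+ 2 = v *+ 2 -> u = v.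
Proof.
move/(congr1 (fun w => 2^-1 *: w)); rewrite -!scaler_nat !scalerA.
by rewrite mulVf ?pnatr_eq0 // !scale1r.
Qed.

Section CliffordAlgebra.
Variables (R : realType) (g : 'I_8 -> 'M[R]_16).
Hypothesis hg : is_clifford_rep g.

Lemma clif3_lin (a : R) T1 T2 T : (forall i j k, T i j k = a * T1 i j k + T2 i j k) ->
  clif3 g T = a *: clif3 g T1 + clif3 g T2.
Proof.
move=> TE; rewrite !clif3_triples8 scaler_sumr -big_split /=.
by apply: eq_bigr => p _; rewrite TE scalerDl scalerA.
Qed.

Lemma clif4_comb (a b : R) F1 F2 F :
  (forall i j k l, F i j k l = a * F1 i j k l + b * F2 i j k l) ->
  clif4 g F = a *: clif4 g F1 + b *: clif4 g F2.
Proof.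
move=> FE; rewrite !clif4_quads8 !scaler_sumr -big_split /=.
by apply: eq_bigr => p _; rewrite FE scalerDl !scalerA.
Qed.

Lemma clif2_eq0 B : (forall i j, B i j = 0) -> clif2 g B = 0.
Proof. by move=> B0; rewrite clif2_pairs8 big1 // => p _; rewrite B0 scale0r. Qed.

Lemma clif_vec_sqr X : clif_vec g X *m clif_vec g X = - (\sum_(i < 8) X i * X i) *: 1%:M.
Proof.
apply: natmul2_inj; rewrite mulr2n clif_vec_anticomm // -scaler_nat scalerA.
by rewrite mulrN mulNr.
Qed.

Lemma cvol_mul_odd (M : 'M[R]_16) : cvol g *m M = - (M *m cvol g) ->
  forall n (w : 'M[R]_(16, n)), cvol g *m (M *m w) = - (M *m (cvol g *m w)).
Proof. by move=> vM n w; rewrite mulmxA vM mulNmx mulmxA. Qed.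

Lemma clif_vec_delta i : clif_vec g (fun j => (j == i)%:R) = g i.
Proof.
rewrite /clif_vec (bigD1 i) //= eqxx scale1r big1 ?addr0 // => j /negbTE ->.
by rewrite scale0r.
Qed.

Lemma clif_vec_support X :
  clif_vec g X != 0 -> exists m, X m != 0.
Proof.
move=> X0; apply/existsP; apply: contraNT X0 => /existsPn X0.
by rewrite /clif_vec big1 // => i _; move/negPn/eqP: (X0 i) => ->; rewrite scale0r.
Qed.

Lemma cvol_clif_gen_mul i n (w : 'M[R]_(16, n)) :
  cvol g *m (g i *m w) = - (g i *m (cvol g *m w)).
Proof. by rewrite -clif_vec_delta (cvol_mul_odd (cvol_clif_vec_anticomm hg _)). Qed.

Lemma clif_gen_mul_eq0 i n (w : 'M[R]_(16, n)) : g i *m w = 0 -> w = 0.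
Proof.
move/(congr1 (mulmx (g i))); rewrite mulmxA clif_gen_sqr // mulNmx mul1mx mulmx0.
by move/eqP; rewrite oppr_eq0 => /eqP.
Qed.

Lemma chiral_sum_eq0 (a b : 'cV[R]_16) : cvol g *m a = - a -> cvol g *m b = b ->
  cvol g *m (a + b) = - (a + b) -> b = 0.
Proof.
move=> va vb; rewrite mulmxDr va vb opprD => /addrI /eqP.
by rewrite -subr_eq0 opprK -mulr2n -scaler_nat scaler_eq0 pnatr_eq0 => /eqP.
Qed.

End CliffordAlgebra.

(** * The 4-form solving the equation *)

(* λ - μ = 1/8 and (λ + μ)|ξ|² = -1/8 are exactly the conditions that make the
   Δ⁺ and Δ⁻ components of the equation vanish (see [solves_four_form]). *)
Definition four_form (R : realType) (xi : vec8 R) (T : form3 R) : form4 R :=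
  let n2 := \sum_(a < 8) xi a * xi a in
  fun i j k l => (1 - n2^-1) / 16 * wedge13 xi T i j k l
                 - (1 + n2^-1) / 16 * hodge4 (wedge13 xi T) i j k l.

Section KillingSolution.
Variables (R : realType) (g : 'I_8 -> 'M[R]_16) (Psip : 'cV[R]_16).
Variables (xi : vec8 R) (T : form3 R).
Hypotheses (hg : is_clifford_rep g) (hp : cvol g *m Psip = Psip).
Hypotheses (T_alt : alternating3 T) (xiT0 : forall j k, contract xi T j k = 0).
Hypotheses (TPsi0 : clif3 g T *m Psip = 0) (xi_nz : \sum_(a < 8) xi a * xi a != 0).

Local Notation n2 := (\sum_(a < 8) xi a * xi a).
Local Notation z := (clif_vec g xi).
Local Notation c := (clif3 g T).

Lemma clif3_xi_anticomm : c *m z = - (z *m c).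
Proof.
apply/eqP; rewrite -addr_eq0 addrC clif_vec3_anticomm //.
by rewrite clif2_eq0 ?scaler0.
Qed.

Lemma clif4_four_form : clif4 g (four_form xi T) =
  (1 - n2^-1) / 16 *: (z *m c) - (1 + n2^-1) / 16 *: (cvol g *m (z *m c)).
Proof.
have zc : clif4 g (wedge13 xi T) = z *m c.
  by apply: natmul2_inj; rewrite -scaler_nat -clif_vec3_comm // clif3_xi_anticomm opprK mulr2n.
rewrite (@clif4_comb _ g ((1 - n2^-1) / 16) (- ((1 + n2^-1) / 16))
  (wedge13 xi T) (hodge4 (wedge13 xi T))) => [|i j k l].
  by rewrite clif4_hodge4 // zc scaleNr.
by rewrite /four_form mulNr.
Qed.

Lemma solves_four_form : solves g (Psip + z *m Psip) T (four_form xi T).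
Proof.
move=> X; set x := clif_vec g X.
set p := (1 - n2^-1) / 16; set q := (1 + n2^-1) / 16.
set A := c *m (x *m Psip).
(* Both sides reduce to multiples of A = T·X·Ψ⁺ ∈ Δ⁺ and of ξ·A ∈ Δ⁻. *)
have vA : cvol g *m A = A.
  by rewrite /A !(cvol_mul_odd (cvol_clif_vec_anticomm hg _),
                  cvol_mul_odd (cvol_clif3_anticomm hg _)) hp mulmxN opprK.
have vz w : cvol g *m (z *m w) = - (z *m (cvol g *m w)) :=
  cvol_mul_odd (cvol_clif_vec_anticomm hg xi) w.
have xzE : x *m z = (-2 * \sum_(i < 8) X i * xi i) *: 1%:M - z *m x.
  by rewrite -(clif_vec_anticomm hg) addrK.
have cxz : c *m (x *m (z *m Psip)) = z *m A.
  rewrite [x *m _]mulmxA xzE mulmxBl -scalemxAl mul1mx mulmxBr -scalemxAr TPsi0 scaler0 sub0r.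
  by rewrite -!mulmxA [c *m (z *m _)]mulmxA clif3_xi_anticomm mulNmx opprK -mulmxA.
have P1 : (x *m c + c *m x) *m Psip = A by rewrite mulmxDl -!mulmxA TPsi0 mulmx0 add0r.
have P2 : (x *m c + c *m x) *m (z *m Psip) = z *m A.
  rewrite mulmxDl -!mulmxA cxz [c *m (z *m _)]mulmxA clif3_xi_anticomm mulNmx -mulmxA TPsi0.
  by rewrite mulmx0 oppr0 mulmx0 add0r.
have P3 : clif4 g (four_form xi T) *m (x *m Psip) = (p + q) *: (z *m A).
  by rewrite clif4_four_form -/p -/q mulmxBl -!scalemxAl -!mulmxA vz vA scalerN opprK scalerDl.
have P4 : clif4 g (four_form xi T) *m (x *m (z *m Psip)) = - ((p - q) * n2) *: A.
  rewrite clif4_four_form -/p -/q mulmxBl -!scalemxAl -!mulmxA cxz vz vz vA mulmxN !opprK.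
  by rewrite -scalerBl mulmxA clif_vec_sqr // -scalemxAl mul1mx scalerA mulrN mulrC.
have c2E : clif2 g (contract X T) = - 2^-1 *: (x *m c + c *m x).
  by rewrite clif_vec3_anticomm // scalerA mulrNN mulVf ?pnatr_eq0 // scale1r.
rewrite c2E -scalemxAl scalerA !mulmxDr P1 P2 P3 P4.
by apply/matrixP => i j; rewrite !mxE /p /q; field.
Qed.

End KillingSolution.

Lemma hodge_index_swap (i j k l : 'I_8) : let h := hodge_index i j k l in
  [/\ hodge_index j i k l = (- h.1, h.2), hodge_index i k j l = (- h.1, h.2)
    & hodge_index i j l k = (- h.1, h.2)].
Proof.
have all_swap : all (fun i => all (fun j => all (fun k => all (fun l =>
    let h := hodge_index i j k l in
    [&& hodge_index j i k l == (- h.1, h.2), hodge_index i k j l == (- h.1, h.2)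
      & hodge_index i j l k == (- h.1, h.2)]) (iota 0 8)) (iota 0 8)) (iota 0 8)) (iota 0 8).
  by vm_compute.
have iota8 (a : 'I_8) : val a \in iota 0 8 by rewrite mem_iota ltn_ord.
move/allP: all_swap => /(_ _ (iota8 i)) /allP /(_ _ (iota8 j)) /allP /(_ _ (iota8 k)).
by move=> /allP /(_ _ (iota8 l)) /and3P [/eqP -> /eqP -> /eqP ->].
Qed.

Section Alternation.
Variable R : realType.

Lemma hodge4_alt (F : form4 R) : alternating4 (hodge4 F).
Proof.
by move=> i j k l; rewrite /hodge4; case: (hodge_index_swap i j k l) => -> -> ->;
  split; rewrite /= intrN mulNr.
Qed.

Lemma wedge13_alt (X : vec8 R) (T : form3 R) : alternating3 T -> alternating4 (wedge13 X T).
Proof.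
move=> T_alt i j k l.
have T12 a b c : T b a c = - T a b c by case: (T_alt a b c).
have T23 a b c : T a c b = - T a b c by case: (T_alt a b c).
rewrite /wedge13; split.
- by rewrite (T12 i j l) (T12 i j k); ring.
- by rewrite (T12 j k l) (T23 i j k); ring.
- by rewrite (T23 j k l) (T23 i k l); ring.
Qed.

Lemma four_form_alt (xi : vec8 R) (T : form3 R) : alternating3 T -> alternating4 (four_form xi T).
Proof.
move=> T_alt i j k l; rewrite /four_form.
case: (wedge13_alt xi T_alt i j k l) => -> -> ->.
by case: (hodge4_alt (wedge13 xi T) i j k l) => -> -> ->; split; ring.
Qed.

Lemma four_form_lin (xi : vec8 R) (a : R) (T1 T2 T : form3 R) :
  (forall i j k, T i j k = a * T1 i j k + T2 i j k) ->
  forall i j k l, four_form xi T i j k l = a * four_form xi T1 i j k l + four_form xi T2 i j k l.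
Proof.
move=> TE i j k l; rewrite /four_form /hodge4 /wedge13 !TE.
by move: (hodge_index _ _ _ _) => h; ring.
Qed.

End Alternation.

(** * Every negative spinor is X·Ψ⁺ *)

Lemma sum_sqr_eq0 (R : realDomainType) n (X : 'I_n -> R) :
  \sum_(i < n) X i * X i = 0 -> forall i, X i = 0.
Proof.
move=> sum0 i.
have sqr_ge0 j : true -> 0 <= X j * X j by rewrite -expr2 sqr_ge0.
have /eqP : X i * X i = 0 := psumr_eq0P sqr_ge0 sum0 isT.
by rewrite mulf_eq0 orbb => /eqP.
Qed.

Lemma linear_row_sum (R : pzRingType) (V : lmodType R) n (f : 'rV[R]_n -> V) :
  (forall a u v, f (a *: u + v) = a *: f u + f v) ->
  forall u, f u = \sum_(i < n) u 0 i *: f (delta_mx 0 i).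
Proof.
move=> f_lin u.
have f0 : f 0 = 0.
  by apply: (@addrI _ (f 0)); rewrite addr0 -{1}(scale1r (f 0)) -f_lin scale1r addr0.
have fD x y : f (x + y) = f x + f y by have := f_lin 1 x y; rewrite !scale1r.
have fZ a x : f (a *: x) = a *: f x by have := f_lin a x 0; rewrite !addr0 f0 addr0.
by rewrite {1}(row_sum_delta u) (big_morph f fD f0); apply: eq_bigr => i _; rewrite fZ.
Qed.

Lemma row_free_annihilator (R : fieldType) m n k (Phi : 'M[R]_(m, n)) :
  (k + \rank Phi <= m)%N -> exists2 B : 'M[R]_(k, m), row_free B & B *m Phi = 0.
Proof.
move=> km; have kK : (k <= \rank (kermx Phi))%N by rewrite mxrank_ker; lia.
exists (pid_mx k *m row_base (kermx Phi)).
  by rewrite /row_free mxrankMfree ?row_base_free // rank_pid_mx.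
by apply/sub_kermxP; rewrite (submx_trans (submxMl _ _)) // eq_row_base.
Qed.

Section PlusToMinus.
Variables (R : realType) (g : 'I_8 -> 'M[R]_16) (Psip : 'cV[R]_16).
Hypotheses (hg : is_clifford_rep g) (hp : cvol g *m Psip = Psip) (hp0 : Psip != 0).

Definition vec_of_row (u : 'rV[R]_8) : vec8 R := fun i => u 0 i.

Definition clif_rows : 'M[R]_(8, 16) := \matrix_(i < 8, r < 16) (g i *m Psip) r 0.

Lemma clif_rowsE u : (u *m clif_rows)^T = clif_vec g (vec_of_row u) *m Psip.
Proof.
rewrite /clif_vec mulmx_suml; apply/matrixP => r s; rewrite (ord1 s) summxE !mxE.
by apply: eq_bigr => i _; rewrite -scalemxAl [in RHS]mxE !mxE.
Qed.

Lemma clif_vec_mul_eq0 X : clif_vec g X *m Psip = 0 -> forall i, X i = 0.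
Proof.
move=> XPsi0; apply: sum_sqr_eq0; apply/eqP; rewrite -oppr_eq0.
have : (- \sum_(i < 8) X i * X i) *: Psip = 0.
  by rewrite -mul_scalar_mx -scalemx1 -(clif_vec_sqr hg X) -mulmxA XPsi0 mulmx0.
by move/eqP; rewrite scaler_eq0 (negbTE hp0) orbF.
Qed.

Lemma cvol_clif_vec_mul X : cvol g *m (clif_vec g X *m Psip) = - (clif_vec g X *m Psip).
Proof. by rewrite (cvol_mul_odd (cvol_clif_vec_anticomm hg X)) hp. Qed.

(* Rows X·Ψ⁺ ∈ Δ⁻ and e_0·X·Ψ⁺ ∈ Δ⁺: their independence gives dim Δ = 16 ≤ 2·8,
   hence X ↦ X·Ψ⁺ is onto Δ⁻. *)
Definition spin_rows : 'M[R]_(8 + 8, 16) := col_mx clif_rows (clif_rows *m (g ord0)^T).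

Lemma spin_rowsE (u : 'rV[R]_(8 + 8)) : (u *m spin_rows)^T =
  clif_vec g (vec_of_row (lsubmx u)) *m Psip
  + g ord0 *m (clif_vec g (vec_of_row (rsubmx u)) *m Psip).
Proof.
rewrite -{1}[u]hsubmxK mul_row_col mulmxA linearD /= [(_ *m _^T)^T]trmx_mul.
by rewrite trmxK !clif_rowsE.
Qed.

Lemma spin_rows_minus (u : 'rV[R]_(8 + 8)) :
  cvol g *m (u *m spin_rows)^T = - (u *m spin_rows)^T ->
  g ord0 *m (clif_vec g (vec_of_row (rsubmx u)) *m Psip) = 0.
Proof.
rewrite spin_rowsE; apply: chiral_sum_eq0; first exact: cvol_clif_vec_mul.
by rewrite (cvol_clif_gen_mul hg) cvol_clif_vec_mul mulmxN opprK.
Qed.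

Lemma vec_of_row_eq0 (u : 'rV[R]_8) : (forall i, vec_of_row u i = 0) -> u = 0.
Proof. by move=> u0; apply/rowP => i; rewrite mxE -[u 0 i]/(vec_of_row u i) u0. Qed.

Lemma spin_rows_free : row_free spin_rows.
Proof.
apply/inj_row_free => u u0.
have u0T : (u *m spin_rows)^T = 0 by rewrite u0 trmx0.
have r0 := @spin_rows_minus u; rewrite u0T mulmx0 oppr0 in r0.
move: u0T; rewrite spin_rowsE (r0 erefl) addr0.
move/clif_vec_mul_eq0/vec_of_row_eq0 => l0.
move/(clif_gen_mul_eq0 hg)/clif_vec_mul_eq0/vec_of_row_eq0: (r0 erefl) => r00.
by rewrite -[u]hsubmxK l0 r00 row_mx0.
Qed.

Lemma minus_sub_clif_rows (v : 'cV[R]_16) : cvol g *m v = - v -> (v^T <= clif_rows)%MS.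
Proof.
move=> vv; have /submxP [u vE] : (v^T <= spin_rows)%MS.
  by rewrite submx_full // row_full_unit -row_free_unit spin_rows_free.
have r0 := @spin_rows_minus u; rewrite -vE trmxK in r0.
by rewrite vE -[_ *m _]trmxK spin_rowsE (r0 vv) addr0 -clif_rowsE trmxK submxMl.
Qed.

Lemma clif_vec_onto_minus (v : 'cV[R]_16) :
  cvol g *m v = - v -> exists X, clif_vec g X *m Psip = v.
Proof.
case/minus_sub_clif_rows/submxP => u vE.
by exists (vec_of_row u); rewrite -clif_rowsE -vE trmxK.
Qed.

Lemma minus_valued_kernel k n (f : 'rV[R]_n -> 'cV[R]_16) : (k + 8 <= n)%N ->
  (forall a u v, f (a *: u + v) = a *: f u + f v) -> (forall u, cvol g *m f u = - f u) ->
  exists2 B : 'M[R]_(k, n), row_free B & forall u, f (u *m B) = 0.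
Proof.
move=> kn f_lin f_minus.
pose Phi := \matrix_(i < n, r < 16) f (delta_mx 0 i) r 0.
have PhiE u : (u *m Phi)^T = f u.
  rewrite [RHS](linear_row_sum f_lin); apply/matrixP => r s.
  by rewrite (ord1 s) !mxE summxE; apply: eq_bigr => i _; rewrite !mxE.
have rank8 : (\rank Phi <= 8)%N.
  apply: leq_trans (rank_leq_row clif_rows); apply/mxrankS/row_subP => i.
  by rewrite rowE -[_ *m Phi]trmxK PhiE minus_sub_clif_rows.
have [|B freeB BPhi0] := @row_free_annihilator _ n 16 k Phi; first by lia.
by exists B => // u; rewrite -PhiE -mulmxA BPhi0 mulmx0 trmx0.
Qed.

End PlusToMinus.

(** * The 3-forms annihilated by ξ *)

Definition triples7 : seq (nat * nat * nat) :=
  [seq (p, c) | p <- [seq (a, b) | a <- iota 0 7, b <- [seq b <- iota 0 7 | (a < b)%N]],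
                c <- [seq c <- iota 0 7 | (p.2 < c)%N]].

Lemma sort3_swap (a b c : 'I_7) : let s := sort3 a b c in
  [/\ (sort3 b a c).1 = - s.1, (sort3 a c b).1 = - s.1
    & s.1 = 0 \/ (sort3 b a c).2 = s.2 /\ (sort3 a c b).2 = s.2].
Proof.
have all_swap : all (fun a => all (fun b => all (fun c =>
    let s := sort3 a b c in let s1 := sort3 b a c in let s2 := sort3 a c b in
    [&& s1.1 == - s.1, s2.1 == - s.1 & (s.1 == 0) || ((s1.2 == s.2) && (s2.2 == s.2))])
  (iota 0 7)) (iota 0 7)) (iota 0 7) by vm_compute.
have iota7 (x : 'I_7) : val x \in iota 0 7 by rewrite mem_iota ltn_ord.
move/allP: all_swap => /(_ _ (iota7 a)) /allP /(_ _ (iota7 b)) /allP /(_ _ (iota7 c)).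
case/and3P => /eqP -> /eqP -> /orP [/eqP s0 | /andP [/eqP -> /eqP ->]].
  by split => //; left.
by split => //; right.
Qed.

Lemma triples7_nth (n : 'I_35) : let q := nth (0, 0, 0)%N triples7 n in
  [/\ sort3 q.1.1 q.1.2 q.2 = (1, q), index q triples7 = n
    & [/\ (q.1.1 < 7)%N, (q.1.2 < 7)%N & (q.2 < 7)%N]].
Proof.
have all_nth : all (fun n => let q := nth (0, 0, 0)%N triples7 n in
    [&& sort3 q.1.1 q.1.2 q.2 == (1, q), index q triples7 == n, (q.1.1 < 7)%N,
        (q.1.2 < 7)%N & (q.2 < 7)%N]) (iota 0 35) by vm_compute.
move=> q; move/allP: all_nth => /(_ (val n)); rewrite mem_iota ltn_ord -/q => /(_ isT) /=.
by case/and5P => /eqP -> /eqP -> -> -> ->.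
Qed.

Section Contraction.
Variables (R : realType) (X : vec8 R) (T : form3 R).
Hypothesis T_alt : alternating3 T.

Lemma contract_alt3 j k : contract X T k j = - contract X T j k.
Proof.
rewrite /contract -sumrN; apply: eq_bigr => i _.
by case: (T_alt i j k) => _ ->; rewrite mulrN.
Qed.

Lemma contract2_alt3 l : \sum_(i < 8) X i * contract X T i l = 0.
Proof.
set S := LHS; suff : S = - S by lra.
rewrite {1}/S /contract; under eq_bigr do rewrite mulr_sumr.
rewrite exchange_big /S -sumrN; apply: eq_bigr => a _.
rewrite /contract mulr_sumr -sumrN; apply: eq_bigr => b _.
by case: (T_alt b a l) => -> _; ring.
Qed.

End Contraction.

Section Parametrization.
Variables (R : realType) (xi : vec8 R) (m : 'I_8).

(* The alternating 3-form on R⁷ whose coordinates on the increasing triples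
   (listed in [triples7]) are given by t. *)
Definition alt3_row (t : 'rV[R]_35) (a b c : 'I_7) : R :=
  (sort3 a b c).1%:~R * t 0 (inord (index (sort3 a b c).2 triples7)).

Lemma alt3_row_alt t a b c :
  alt3_row t b a c = - alt3_row t a b c /\ alt3_row t a c b = - alt3_row t a b c.
Proof.
have flip (x' x : int) (q' q : nat * nat * nat) : x' = - x -> x = 0 \/ q' = q ->
    x'%:~R * t 0 (inord (index q' triples7)) = - (x%:~R * t 0 (inord (index q triples7))).
  move=> -> [-> | ->]; last by rewrite intrN mulNr.
  by rewrite oppr0 !mul0r oppr0.
rewrite /alt3_row; case: (sort3_swap a b c) => e1 e2 [s0 | [q1 q2]].
  by split; apply: flip => //; left.
by split; apply: flip => //; right.
Qed.

Lemma alt3_row_nth t (n : 'I_35) : let q := nth (0, 0, 0)%N triples7 n in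
  alt3_row t (inord q.1.1) (inord q.1.2) (inord q.2) = t 0 n.
Proof.
case: (triples7_nth n) => sq qn [a7 b7 c7].
by rewrite /alt3_row !inordK // sq qn inord_val mul1r.
Qed.

Lemma alt3_row_lin a t s x y z :
  alt3_row (a *: t + s) x y z = a * alt3_row t x y z + alt3_row s x y z.
Proof. by rewrite /alt3_row; move: (sort3 _ _ _) => q; rewrite !mxE; ring. Qed.

Definition lift_alt3 (t : 'rV[R]_35) (i j k : 'I_8) : R :=
  if (unlift m i, unlift m j, unlift m k) is (Some a, Some b, Some c)
  then alt3_row t a b c else 0.

Lemma lift_alt3_alt t : alternating3 (lift_alt3 t).
Proof.
move=> i j k; rewrite /lift_alt3.
case: (unlift m i) => [a|]; case: (unlift m j) => [b|]; case: (unlift m k) => [c|];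
  rewrite ?oppr0 //; exact: alt3_row_alt.
Qed.

Lemma lift_alt3_lin a t s i j k :
  lift_alt3 (a *: t + s) i j k = a * lift_alt3 t i j k + lift_alt3 s i j k.
Proof.
rewrite /lift_alt3; case: (unlift m i) => [x|]; case: (unlift m j) => [y|];
  case: (unlift m k) => [z|]; rewrite ?alt3_row_lin //; ring.
Qed.

(* U - ξ_m⁻¹ e_m ∧ (ξ⌟U) for U the extension of [alt3_row t] by zero in the
   direction e_m: it satisfies ξ⌟T = 0 and restricts to [alt3_row t] off m. *)
Definition perp_alt3 (t : 'rV[R]_35) : form3 R := fun i j k =>
  lift_alt3 t i j k - (xi m)^-1 * ((i == m)%:R * contract xi (lift_alt3 t) j k
    - (j == m)%:R * contract xi (lift_alt3 t) i k + (k == m)%:R * contract xi (lift_alt3 t) i j).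

Lemma perp_alt3_alt t : alternating3 (perp_alt3 t).
Proof.
move=> i j k; case: (lift_alt3_alt t i j k) => U12 U23.
have C21 := contract_alt3 xi (lift_alt3_alt t).
by rewrite /perp_alt3 U12 U23 (C21 i j) (C21 j k); split; ring.
Qed.

Lemma perp_alt3_lin a t s i j k :
  perp_alt3 (a *: t + s) i j k = a * perp_alt3 t i j k + perp_alt3 s i j k.
Proof.
have CL x y : contract xi (lift_alt3 (a *: t + s)) x y =
    a * contract xi (lift_alt3 t) x y + contract xi (lift_alt3 s) x y.
  rewrite /contract mulr_sumr -big_split; apply: eq_bigr => l _.
  by rewrite lift_alt3_lin /=; ring.
by rewrite /perp_alt3 lift_alt3_lin !CL; ring.
Qed.

Lemma perp_alt3_lift t a b c :
  perp_alt3 t (lift m a) (lift m b) (lift m c) = alt3_row t a b c.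
Proof.
have m_lift x : (lift m x == m) = false by rewrite eq_sym (negbTE (neq_lift m x)).
by rewrite /perp_alt3 !m_lift /lift_alt3 !liftK !mul0r !subrr addr0 mulr0 subr0.
Qed.

Lemma perp_alt3_inj : injective perp_alt3.
Proof.
by move=> t s ts; apply/rowP => n; rewrite -!(alt3_row_nth _ n) -!perp_alt3_lift ts.
Qed.

Hypothesis xim : xi m != 0.

Lemma contract_perp_alt3 t j k : contract xi (perp_alt3 t) j k = 0.
Proof.
set C := contract xi (lift_alt3 t).
have xiC := contract2_alt3 xi (lift_alt3_alt t).
have xi_m (f : R) : \sum_(i < 8) xi i * ((i == m)%:R * f) = xi m * f.
  rewrite (bigD1 m) //= eqxx mul1r big1 ?addr0 // => i /negbTE ->.
  by rewrite mul0r mulr0.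
have -> : contract xi (perp_alt3 t) j k =
    C j k - (xi m)^-1 * (\sum_(i < 8) xi i * ((i == m)%:R * C j k))
    + (xi m)^-1 * (j == m)%:R * (\sum_(i < 8) xi i * C i k)
    - (xi m)^-1 * (k == m)%:R * (\sum_(i < 8) xi i * C i j).
  rewrite /contract /perp_alt3 !mulr_sumr -!sumrN -!big_split /=.
  by apply: eq_bigr => i _; rewrite -/C; ring.
by rewrite !xiC xi_m mulrA mulVf //; ring.
Qed.

End Parametrization.

Theorem mainTheorem6 (R : realType) (g : 'I_8 -> 'M[R]_16)
  (hg : is_clifford_rep g) (Psip Psim : 'cV[R]_16)
  (hp : cvol g *m Psip = Psip) (hm : cvol g *m Psim = - Psim)
  (hp0 : Psip != 0) (hm0 : Psim != 0) :
  exists P : 'rV[R]_25 -> form3 R * form4 R,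
    [/\ forall (a : R) (u v : 'rV[R]_25) i j k,
          (P (a *: u + v)).1 i j k = a * (P u).1 i j k + (P v).1 i j k,
        forall (a : R) (u v : 'rV[R]_25) i j k l,
          (P (a *: u + v)).2 i j k l = a * (P u).2 i j k l + (P v).2 i j k l,
        injective P
      & forall u : 'rV[R]_25,
          [/\ alternating3 (P u).1, alternating4 (P u).2
            & solves g (Psip + Psim) (P u).1 (P u).2]].
Proof.
have [xi xiE] := clif_vec_onto_minus hg hp hp0 hm.
have [m xim] : exists m, xi m != 0.
  by apply: (@clif_vec_support _ g); apply: contraNneq hm0 => xi0; rewrite -xiE xi0 mul0mx.
have xi_nz : \sum_(i < 8) xi i * xi i != 0 by apply: contra xim => /eqP/sum_sqr_eq0 ->.
pose f u := clif3 g (perp_alt3 xi m u) *m Psip.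
have f_lin a u v : f (a *: u + v) = a *: f u + f v.
  by rewrite /f (clif3_lin g (perp_alt3_lin xi m a u v)) mulmxDl -scalemxAl.
have f_minus u : cvol g *m f u = - f u.
  by rewrite /f (cvol_mul_odd (cvol_clif3_anticomm hg _)) hp.
have [B freeB fB0] := @minus_valued_kernel _ g Psip hg hp hp0 25 35 f isT f_lin f_minus.
pose T u := perp_alt3 xi m (u *m B).
exists (fun u => (T u, four_form xi (T u))); split => /=.
- by move=> a u v i j k; rewrite /T mulmxDl -scalemxAl perp_alt3_lin.
- move=> a u v; apply: four_form_lin => i j k.
  by rewrite /T mulmxDl -scalemxAl perp_alt3_lin.
- by move=> u v [/perp_alt3_inj /(row_free_inj freeB)].
- move=> u; have T_alt := perp_alt3_alt xi m (u *m B).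
  split=> //; first exact: four_form_alt.
  by rewrite -xiE; apply: solves_four_form => //; [exact: contract_perp_alt3 | exact: fB0].
Qed.
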